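(* Let $\mathcal C$ be a Clifford circuit with linear outcome code $\mathcal O(\mathcal C)$. For all $u,v\in\mathcal O(\mathcal C)^\perp$, $[\overleftarrow{F(u)},\overleftarrow{F(v)}]=0$.
   Context: A Clifford circuit on $n$ qubits is a finite sequence of operations, each a unitary Clifford gate or the measurement of a Hermitian $n$-qubit Pauli, each with a level in $\{1,2,\dots\}$; operations of equal level have disjoint supports and levels are nondecreasing; depth $\Delta$ = maximal level. In circuit order the $j$-th measurement measures $S_j$ at level $\ell_j$ ($j=1,\dots,m$); outcome $o_j=0$ for eigenvalue $+1$, $1$ for $-1$. The outcome code $\mathcal O(\mathcal C)\subseteq\mathbb Z_2^m$ is the set of outcome bit-strings occurring with nonzero probability for some input state; $\perp$ refers to $(u|v)=\sum u_iv_i\bmod 2$. $\overline{\mathcal P}_N$ is the $N$-qubit Pauli group modulo phases; $[P,Q]\in\mathbb Z_2$ is $0$ iff $P,Q$ commute. $U_\ell$ is the product of unitary gates of level $\ell$ (identity if none). Fault operators $F\in\overline{\mathcal P}_{n(\Delta+1)}$ act on qubits $(\ell+0.5,q)$, $0\le\ell\le\Delta$, $1\le q\le n$, with level components $F_{\ell+0.5}$; $\eta_{\ell+0.5}(P)$ is $P$ at level $\ell+0.5$ and $I$ elsewhere. Back-cumulant $\overleftarrow F$: start with $F$; for $\ell=\Delta,\dots,1$ replace $\overleftarrow F_{\ell-0.5}$ by $\overleftarrow F_{\ell-0.5}\cdot U_\ell^{-1}\overleftarrow F_{\ell+0.5}U_\ell$. $F(u)=\prod_j\eta_{\ell_j-0.5}(S_j^{u_j})$.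 *)

From HB Require Import structures.
From mathcomp Require Import all_boot all_order all_algebra algC.
Set Implicit Arguments. Unset Strict Implicit. Unset Printing Implicit Defensive.
Import Order.TTheory GRing.Theory Num.Theory.
Local Open Scope ring_scope.

Section Clifford.
Variable n : nat.

(** Operators on n qubits: 2^n x 2^n complex matrices; basis index i encodes
    the bit string with bit q equal to odd (i %/ 2^q). *)
Definition op_mx := 'M[algC]_(2 ^ n).
Definition bit (i : 'I_(2 ^ n)) (q : 'I_n) : bool := odd (i %/ 2 ^ q).

(** n-qubit Pauli modulo phases: X-part and Z-part. *)
Definition pauli : finType := ({ffun 'I_n -> bool} * {ffun 'I_n -> bool})%type.
Definition pauli_id : pauli := ([ffun => false], [ffun => false]).
Definition pauli_mul (p p' : pauli) : pauli :=
  ([ffun q => p.1 q (+) p'.1 q], [ffun q => p.2 q (+) p'.2 q]).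
(** [P,Q] : false iff P and Q commute. *)
Definition pauli_comm (p p' : pauli) : bool :=
  \big[addb/false]_(q < n) ((p.1 q && p'.2 q) (+) (p.2 q && p'.1 q)).
Definition pauli_supp (p : pauli) : {set 'I_n} := [set q | p.1 q || p.2 q].

(** The matrix X^x Z^z. *)
Definition pauli_mx (p : pauli) : op_mx :=
  \matrix_(i, j) (([forall q, bit i q == (bit j q (+) p.1 q)])%:R *
                  (-1) ^+ (\sum_(q < n) (p.2 q && bit j q))).
Definition herm_pauli_mx (s : bool) (p : pauli) : op_mx :=
  ((-1) ^+ s * 'i ^+ (\sum_(q < n) (p.1 q && p.2 q))) *: pauli_mx p.

Definition adj (U : op_mx) : op_mx := (map_mx Num.conj U)^T.
Definition unitary (U : op_mx) : Prop := U *m adj U = 1%:M.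
Definition clifford (U : op_mx) : Prop :=
  forall p : pauli, exists (c : algC) (p' : pauli),
    U *m pauli_mx p *m adj U = c *: pauli_mx p'.
(** U acts as U_A (x) I outside the qubit set A (entrywise unfolding). *)
Definition acts_within (A : {set 'I_n}) (U : op_mx) : Prop :=
  (forall i j, (exists2 q, q \notin A & bit i q != bit j q) -> U i j = 0) /\
  (forall i j i' j',
      (forall q, q \in A -> bit i q = bit i' q) ->
      (forall q, q \in A -> bit j q = bit j' q) ->
      (forall q, q \notin A -> bit i q = bit j q) ->
      (forall q, q \notin A -> bit i' q = bit j' q) ->
      U i j = U i' j').

(** Operations of a circuit: a unitary gate or a measurement of a Hermitian
    Pauli (sign bit, Pauli mod phase); each with a level and a declared support. *)
Inductive kind := Gate of op_mx | Meas of bool & pauli.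
Record operation := Op { lvl : nat; supp : {set 'I_n}; knd : kind }.
Definition circuit := seq operation.

Definition op_ok (o : operation) : Prop :=
  (1 <= lvl o)%N /\
  match knd o with
  | Gate U => unitary U /\ clifford U /\ acts_within (supp o) U
  | Meas _ p => pauli_supp p \subset supp o
  end.

Definition well_formed (C : circuit) : Prop :=
  (forall i, (i < size C)%N -> op_ok (nth (Op 0 set0 (Gate 1%:M)) C i)) /\
  (forall i j, (i < j < size C)%N ->
     let oi := nth (Op 0 set0 (Gate 1%:M)) C i in
     let oj := nth (Op 0 set0 (Gate 1%:M)) C j in
     (lvl oi <= lvl oj)%N /\ (lvl oi = lvl oj -> [disjoint supp oi & supp oj])).

Definition depth (C : circuit) : nat := \max_(o <- C) lvl o.

Definition meas (C : circuit) : seq (nat * bool * pauli) :=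
  pmap (fun o => if knd o is Meas s p then Some (lvl o, s, p) else None) C.
Definition nmeas (C : circuit) : nat := size (meas C).

(** Kraus operator of the circuit for outcome string o (o_j = 0 for +1). *)
Fixpoint kraus (C : circuit) (o : seq bool) (K : op_mx) : op_mx :=
  match C with
  | [::] => K
  | op :: C' =>
    match knd op with
    | Gate U => kraus C' o (U *m K)
    | Meas s p =>
        let b := head false o in
        kraus C' (behead o)
          ((2%:R)^-1 *: (1%:M + (-1) ^+ b *: herm_pauli_mx s p) *m K)
    end
  end.

Definition sqnorm (v : 'cV[algC]_(2 ^ n)) : algC :=
  ((map_mx Num.conj v)^T *m v) 0 0.

Definition in_outcome_code (C : circuit) (o : seq bool) : Prop :=
  size o = nmeas C /\
  exists psi : 'cV[algC]_(2 ^ n),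
    sqnorm psi = 1 /\ sqnorm (kraus C o 1%:M *m psi) != 0.

Definition xorseq (o o' : seq bool) : seq bool := [seq x.1 (+) x.2 | x <- zip o o'].

Definition linear_outcome_code (C : circuit) : Prop :=
  in_outcome_code C (nseq (nmeas C) false) /\
  forall o o', in_outcome_code C o -> in_outcome_code C o' ->
               in_outcome_code C (xorseq o o').

Definition dotb (m : nat) (u o : seq bool) : bool :=
  \big[addb/false]_(j < m) (nth false u j && nth false o j).

Definition in_outcome_perp (C : circuit) (u : seq bool) : Prop :=
  size u = nmeas C /\
  forall o, in_outcome_code C o -> dotb (nmeas C) u o = false.

(** Fault operators: component at level k + 0.5 is (F k), k = 0..depth. *)
Definition fault := nat -> pauli.

Definition fault_comm (D : nat) (F G : fault) : bool :=
  \big[addb/false]_(k < D.+1) pauli_comm (F k) (G k).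

(** F(u) = prod_j eta_{l_j - 0.5}(S_j^{u_j}). *)
Definition F_of (C : circuit) (u : seq bool) : fault := fun k =>
  foldr pauli_mul pauli_id
    [seq (nth (0%N, false, pauli_id) (meas C) j).2
    | j <- iota 0 (nmeas C)
    & nth false u j && ((nth (0%N, false, pauli_id) (meas C) j).1.1 - 1 == k)%N].

Definition U_level (C : circuit) (l : nat) : op_mx :=
  foldl (fun acc o => if knd o is Gate U then
                        (if lvl o == l then U *m acc else acc) else acc) 1%:M C.

(** U^{-1} P U modulo phases. *)
Definition conjP (U : op_mx) (p : pauli) : pauli :=
  if [pick p' | is_scalar_mx (invmx U *m pauli_mx p *m U *m invmx (pauli_mx p'))]
  is Some p' then p' else p.

(** Back-cumulant: G_D = F_D, G_{l-1} = F_{l-1} * U_l^{-1} G_l U_l. *)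
Fixpoint bc_aux (C : circuit) (F : fault) (i : nat) : pauli :=
  match i with
  | 0 => F (depth C)
  | i'.+1 => pauli_mul (F (depth C - i)%N)
                       (conjP (U_level C (depth C - i')) (bc_aux C F i'))
  end.

Definition back_cumulant (C : circuit) (F : fault) : fault := fun k =>
  if (k <= depth C)%N then bc_aux C F (depth C - k) else F k.

End Clifford.

(* Fix a level k and let K be the Kraus operator of the levels <= k for the
   all-(+1) outcomes; K <> 0 because the zero string is an outcome.  For u
   orthogonal to the outcome code, let W_u be the levels > k with each measured
   Pauli S_j replaced by S_j^(u_j), and V the product of their gates.  Since
   S P_b = (-1)^b P_b for the eigenprojectors P_b of S, and P_0 + P_1 = 1, W_u K
   is the sum over the outcome strings o of the tail of (-1)^(u.o) times the
   corresponding branch of V K; these strings extend the zero prefix to outcomes,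
   so every sign is +1 and W_u K = V K.  Pulling the inserted Paulis back through
   the gates level by level shows that V^-1 W_u is a scalar multiple of the
   back-cumulant of F(u) at level k + 0.5.  Hence multiples of the back-cumulants
   of F(u) and F(v) both fix K <> 0, so these two Paulis cannot anticommute. *)

From HB Require Import structures.
From mathcomp Require Import all_boot all_order all_algebra algC.
From mathcomp Require Import zify.
Set Implicit Arguments. Unset Strict Implicit. Unset Printing Implicit Defensive.
Import Order.TTheory GRing.Theory Num.Theory.

Lemma odd_divn_pow2_inj m a b : a < 2 ^ m -> b < 2 ^ m ->
  (forall q, q < m -> odd (a %/ 2 ^ q) = odd (b %/ 2 ^ q)) -> a = b.
Proof.
elim: m a b => [|m IH] a b a_lt b_lt eq_bits; first by move: a_lt b_lt; rewrite expn0; lia.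
have eq_half : a %/ 2 = b %/ 2.
  apply: IH; [move: a_lt | move: b_lt | ]; rewrite ?expnS; try lia.
  by move=> q lt_qm; rewrite -!divnMA -expnS; apply: eq_bits.
have := eq_bits 0 isT; rewrite expn0 !divn1 => eq_odd.
by rewrite (divn_eq a 2) (divn_eq b 2) !modn2 eq_half eq_odd.
Qed.

Section Bits.
Variable n : nat.
Implicit Types (i j : 'I_(2 ^ n)) (x : {ffun 'I_n -> bool}).

Lemma bit_inj i j : (forall q, bit i q = bit j q) -> i = j.
Proof.
move=> eq_bits; apply/val_inj/(@odd_divn_pow2_inj n) => [||q lt_qn]; try exact: ltn_ord.
exact: (eq_bits (Ordinal lt_qn)).
Qed.

Let bits_of i := [ffun q => bit i q].

Lemma bits_onto x : x \in codom bits_of.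
Proof.
apply: inj_card_onto; last by rewrite card_ffun card_bool !card_ord.
by move=> i j /ffunP eq_ij; apply: bit_inj => q; have := eq_ij q; rewrite !ffunE.
Qed.

Definition index_of_bits (f : 'I_n -> bool) : 'I_(2 ^ n) := iinv (bits_onto (finfun f)).

Lemma bit_index_of_bits f q : bit (index_of_bits f) q = f q.
Proof.
by have /ffunP/(_ q) := f_iinv (bits_onto (finfun f)); rewrite !ffunE.
Qed.

Definition xor_index x j : 'I_(2 ^ n) := index_of_bits (fun q => bit j q (+) x q).

Lemma bit_xor_index x j q : bit (xor_index x j) q = bit j q (+) x q.
Proof. exact: bit_index_of_bits. Qed.

Lemma xor_indexK x : involutive (xor_index x).
Proof. by move=> j; apply: bit_inj => q; rewrite !bit_xor_index addbK. Qed.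

Lemma eq_xor_index x i j : (i == xor_index x j) = (j == xor_index x i).
Proof. by apply/eqP/eqP => ->; rewrite xor_indexK. Qed.

End Bits.

Local Open Scope ring_scope.

Lemma odd_sum_bool I (r : seq I) (F : I -> bool) :
  odd (\sum_(i <- r) F i) = \big[addb/false]_(i <- r) F i.
Proof.
rewrite (big_morph odd oddD (erefl : odd 0 = false)).
by apply: eq_bigr => i _; case: (F i).
Qed.

Lemma sign_addbK (a b : bool) : (-1) ^+ (a (+) b) * (-1) ^+ b = (-1) ^+ a :> algC.
Proof. by rewrite -signr_addb -addbA addbb addbF. Qed.

Lemma sign_inj : injective (fun b : bool => (-1) ^+ b : algC).
Proof.
move=> a b /=; rewrite !signrE => /addrI/oppr_inj/eqP; rewrite eqr_nat.
by move=> /eqP/double_inj; case: a; case: b.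
Qed.

Section PauliAlgebra.
Variable n : nat.
Implicit Types (p q : pauli n) (i j : 'I_(2 ^ n)) (x z : {ffun 'I_n -> bool}) (M : op_mx n).

Definition zparity z j : bool := \big[addb/false]_(r < n) (z r && bit j r).

Definition zx_form p q : bool := \big[addb/false]_(r < n) (p.2 r && q.1 r).

Lemma zparity_xor_index z x j :
  zparity z (xor_index x j) = zparity z j (+) \big[addb/false]_(r < n) (z r && x r).
Proof.
rewrite /zparity -big_split; apply: eq_bigr => r _.
by rewrite bit_xor_index; case: (z r).
Qed.

Lemma zparity_addb z1 z2 j :
  zparity [ffun r => z1 r (+) z2 r] j = zparity z1 j (+) zparity z2 j.
Proof.
rewrite /zparity -big_split; apply: eq_bigr => r _.
by rewrite ffunE; case: (z1 r); case: (z2 r); case: (bit j r).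
Qed.

Lemma xor_index_pauli_mul p q j :
  xor_index p.1 (xor_index q.1 j) = xor_index (pauli_mul p q).1 j.
Proof. by apply: bit_inj => r; rewrite !bit_xor_index ffunE -addbA (addbC (q.1 r)). Qed.

Lemma pauli_mxE p i j :
  pauli_mx p i j = if i == xor_index p.1 j then (-1) ^+ zparity p.2 j else 0.
Proof.
rewrite mxE -signr_odd odd_sum_bool.
have -> : [forall r, bit i r == bit j r (+) p.1 r] = (i == xor_index p.1 j).
  apply/forallP/eqP => [eq_bits | -> r]; last by rewrite bit_xor_index.
  by apply: bit_inj => r; rewrite bit_xor_index; apply/eqP.
by case: eqP; rewrite ?mul1r ?mul0r.
Qed.

Lemma mulmx_pauli_mxE M p i j :
  (M *m pauli_mx p) i j = M i (xor_index p.1 j) * (-1) ^+ zparity p.2 j.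
Proof.
rewrite mxE (bigD1 (xor_index p.1 j)) //= big1 ?addr0 => [|l /negbTE ne_l].
  by rewrite pauli_mxE eqxx.
by rewrite pauli_mxE ne_l mulr0.
Qed.

Lemma pauli_mx_mulmxE p M i j :
  (pauli_mx p *m M) i j = (-1) ^+ zparity p.2 (xor_index p.1 i) * M (xor_index p.1 i) j.
Proof.
rewrite mxE (bigD1 (xor_index p.1 i)) //= big1 ?addr0 => [|l ne_l].
  by rewrite pauli_mxE -eq_xor_index eqxx.
by rewrite pauli_mxE eq_xor_index (negbTE ne_l) mul0r.
Qed.

Lemma pauli_mxM p q :
  pauli_mx p *m pauli_mx q = (-1) ^+ zx_form p q *: pauli_mx (pauli_mul p q).
Proof.
apply/matrixP => i j; rewrite mulmx_pauli_mxE !pauli_mxE mxE pauli_mxE xor_index_pauli_mul.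
case: eqP => _; last by rewrite !mul0r mulr0.
rewrite zparity_xor_index zparity_addb /zx_form -!signr_addb.
by rewrite [zparity p.2 j (+) _]addbC addbA.
Qed.

Lemma pauli_mulC p q : pauli_mul p q = pauli_mul q p.
Proof. by congr pair; apply/ffunP => r; rewrite !ffunE addbC. Qed.

Lemma pauli_comm_zx_form p q : pauli_comm p q = zx_form p q (+) zx_form q p.
Proof.
rewrite /pauli_comm /zx_form -big_split; apply: eq_bigr => r _.
by rewrite andbC (andbC (q.2 r)) addbC.
Qed.

Lemma pauli_mx_comm p q :
  pauli_mx p *m pauli_mx q = (-1) ^+ pauli_comm p q *: (pauli_mx q *m pauli_mx p).
Proof.
by rewrite !pauli_mxM scalerA pauli_mulC pauli_comm_zx_form sign_addbK.
Qed.

Lemma pauli_mx_id : pauli_mx (pauli_id n) = 1%:M.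
Proof.
apply/matrixP => i j; rewrite pauli_mxE !mxE.
have -> : xor_index (pauli_id n).1 j = j.
  by apply: bit_inj => r; rewrite bit_xor_index ffunE addbF.
rewrite /zparity big1 => [|r _]; last by rewrite ffunE.
by case: eqP.
Qed.

Lemma pauli_mx_sqr p : pauli_mx p *m pauli_mx p = (-1) ^+ zx_form p p *: 1%:M.
Proof.
rewrite pauli_mxM -pauli_mx_id; congr (_ *: pauli_mx _).
by congr pair; apply/ffunP => r; rewrite !ffunE addbb.
Qed.

Lemma pauli_mx_unit p : pauli_mx p \in unitmx.
Proof.
suff /mulmx1_unit[] : pauli_mx p *m ((-1) ^+ zx_form p p *: pauli_mx p) = 1%:M by [].
by rewrite -scalemxAr pauli_mx_sqr scalerA -signr_addb addbb scale1r.
Qed.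

Lemma pauli_mx_neq0 p : pauli_mx p != 0.
Proof.
apply/eqP => p0; have := pauli_mx_sqr p; rewrite p0 mul0mx.
move/matrixP/(_ (index_of_bits xpred0) (index_of_bits xpred0)).
by rewrite !mxE eqxx mulr1 => /eqP; rewrite eq_sym signr_eq0.
Qed.

Lemma herm_pauli_mx_sqr s p : herm_pauli_mx s p *m herm_pauli_mx s p = 1%:M.
Proof.
rewrite /herm_pauli_mx -scalemxAl -scalemxAr pauli_mx_sqr !scalerA mulrACA.
rewrite -signr_addb addbb mul1r -exprMn -expr2 sqrCi -[X in X * _]signr_odd.
rewrite odd_sum_bool (eq_bigr (fun r => p.2 r && p.1 r)) => [|r _]; last by rewrite andbC.
by rewrite -signr_addb addbb scale1r.
Qed.

Lemma pauli_mx_inj p q (c : algC) : pauli_mx p = c *: pauli_mx q -> p = q.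
Proof.
move=> eq_pq; pose j0 := index_of_bits (fun _ : 'I_n => false).
have zparity0 z : zparity z j0 = false.
  by rewrite /zparity big1 // => r _; rewrite bit_index_of_bits andbF.
have /matrixP/(_ (xor_index p.1 j0) j0) := eq_pq.
rewrite !pauli_mxE mxE pauli_mxE eqxx !zparity0 /= expr0.
have [eq_x1 | _] := eqP; last by rewrite mulr0 => /eqP; rewrite oner_eq0.
have {}eq_x1 : p.1 = q.1.
  apply/ffunP => r; have /(congr1 (fun i => bit i r)) := eq_x1.
  by rewrite !bit_xor_index bit_index_of_bits.
rewrite mulr1 => c1; rewrite -c1 scale1r {c1} in eq_pq.
case: p q eq_pq eq_x1 => [x1 z1] [x2 z2] /= eq_pq eq_x1; subst x2.
congr pair; apply/ffunP => r.
pose er := index_of_bits (fun t => t == r).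
have zparity_er z : zparity z er = z r.
  rewrite /zparity (bigD1 r) //= big1 ?addbF => [|t /negbTE ne_t].
    by rewrite bit_index_of_bits eqxx andbT.
  by rewrite bit_index_of_bits ne_t andbF.
have /matrixP/(_ (xor_index x1 er) er) := eq_pq.
by rewrite !pauli_mxE eqxx !zparity_er => /sign_inj.
Qed.

End PauliAlgebra.

Section CliffordConjugation.
Variable n : nat.
Implicit Types (U V M : op_mx n) (p q : pauli n).

Lemma adjM U V : adj (U *m V) = adj V *m adj U.
Proof. by rewrite /adj map_mxM trmx_mul. Qed.

Lemma adj1 : adj (1%:M : op_mx n) = 1%:M.
Proof. by rewrite /adj map_mx1 trmx1. Qed.

Lemma unitary_invmx U : unitary U -> invmx U = adj U.
Proof.
move=> uU; have [unit_U _] := mulmx1_unit uU.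
by rewrite -[invmx U]mulmx1 -uU mulmxA mulVmx ?mul1mx.
Qed.

Lemma mul_adj_unitary U : unitary U -> adj U *m U = 1%:M.
Proof. exact: mulmx1C. Qed.

Lemma unitary_conjK U M : unitary U -> adj U *m (U *m M *m adj U) *m U = M.
Proof.
by move=> /mul_adj_unitary UadjK; rewrite !mulmxA UadjK mul1mx -mulmxA UadjK mulmx1.
Qed.

Definition clifford_unitary U := unitary U /\ clifford U.

Lemma clifford_unitary1 : clifford_unitary 1%:M.
Proof.
split=> [|p]; first by rewrite /unitary adj1 mul1mx.
by exists 1, p; rewrite adj1 mul1mx mulmx1 scale1r.
Qed.

Lemma clifford_unitaryM U V :
  clifford_unitary U -> clifford_unitary V -> clifford_unitary (U *m V).
Proof.
move=> [uU cU] [uV cV]; split.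
  by rewrite /unitary adjM mulmxA -(mulmxA U) uV mulmx1 uU.
move=> p; have [c [p' eq_p']] := cV p; have [d [p'' eq_p'']] := cU p'.
exists (c * d), p''; rewrite adjM.
have -> : U *m V *m pauli_mx p *m (adj V *m adj U) = U *m (V *m pauli_mx p *m adj V) *m adj U.
  by rewrite !mulmxA.
by rewrite eq_p' -scalemxAr -scalemxAl eq_p'' scalerA.
Qed.

Definition pauli_part (M : op_mx n) (p0 : pauli n) : pauli n :=
  if [pick p' | is_scalar_mx (M *m invmx (pauli_mx p'))] is Some p' then p' else p0.

Lemma pauli_partP M p0 :
  (exists c p, M = c *: pauli_mx p) -> exists c, M = c *: pauli_mx (pauli_part M p0).
Proof.
move=> [c [p eq_M]]; rewrite /pauli_part; case: pickP => [p' /is_scalar_mxP [a eq_a] | no_p].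
  exists a; rewrite -mul_scalar_mx -eq_a -mulmxA mulVmx ?mulmx1 //.
  exact: pauli_mx_unit.
have := no_p p; rewrite eq_M -scalemxAl mulmxV ?pauli_mx_unit // scalemx1.
by rewrite scalar_mx_is_scalar.
Qed.

Lemma clifford_unitary_adj_conj U q :
  clifford_unitary U -> exists c p, adj U *m pauli_mx q *m U = c *: pauli_mx p.
Proof.
move=> [uU cU]; pose f p := pauli_part (U *m pauli_mx p *m adj U) p.
have conj_f p : exists2 d, d != 0 & U *m pauli_mx p *m adj U = d *: pauli_mx (f p).
  have [d eq_d] := pauli_partP p (cU p); exists d => //.
  apply: contra_neq (pauli_mx_neq0 p) => d0.
  by rewrite -(unitary_conjK (pauli_mx p) uU) eq_d d0 scale0r mulmx0 mul0mx.
have f_inj : injective f.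
  move=> p1 p2 eq_f; have [d1 _ eq_d1] := conj_f p1; have [d2 nz_d2 eq_d2] := conj_f p2.
  apply: (@pauli_mx_inj _ _ _ (d1 / d2)).
  rewrite -(unitary_conjK (pauli_mx p1) uU) -(unitary_conjK (pauli_mx p2) uU).
  by rewrite eq_d1 eq_d2 eq_f -!scalemxAr -!scalemxAl scalerA mulfVK.
have /codomP [p ->] := injF_onto f_inj q; have [d nz_d eq_d] := conj_f p.
exists d^-1, p; rewrite -[pauli_mx (f p)](scalerK nz_d) -eq_d.
by rewrite -scalemxAr -scalemxAl unitary_conjK.
Qed.

Lemma conjP_pauli U p :
  clifford_unitary U -> exists c, adj U *m pauli_mx p *m U = c *: pauli_mx (conjP U p).
Proof.
move=> cU; rewrite -(unitary_invmx cU.1); apply: pauli_partP.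
by rewrite (unitary_invmx cU.1); apply: clifford_unitary_adj_conj.
Qed.

Lemma acts_within_pauli_comm (A : {set 'I_n}) U p :
  acts_within A U -> [disjoint pauli_supp p & A] ->
  U *m pauli_mx p = pauli_mx p *m U.
Proof.
move=> [U_off U_loc] disj_pA.
have p_offA r : r \in A -> p.1 r = false /\ p.2 r = false.
  by move=> rA; move: (disjointFl disj_pA rA); rewrite inE; case: (p.1 r); case: (p.2 r).
apply/matrixP => i j; rewrite mulmx_pauli_mxE pauli_mx_mulmxE.
case: (boolP [exists r, (r \notin A) && (bit i r != bit (xor_index p.1 j) r)]).
  move=> /existsP [r /andP [rA ne_r]]; rewrite !U_off ?mul0r ?mulr0 //; exists r => //.
  by apply: contra ne_r; rewrite !bit_xor_index => /eqP <-; rewrite addbK.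
rewrite negb_exists => /forallP same_out.
have out r : r \notin A -> bit i r = bit (xor_index p.1 j) r.
  by move=> rA; have := same_out r; rewrite rA negbK => /eqP.
have outx r : r \notin A -> bit (xor_index p.1 i) r = bit j r.
  by move=> rA; rewrite !bit_xor_index out // bit_xor_index addbK.
have inx k r : r \in A -> bit (xor_index p.1 k) r = bit k r.
  by move=> rA; rewrite bit_xor_index (p_offA r rA).1 addbF.
have -> : zparity p.2 (xor_index p.1 i) = zparity p.2 j.
  apply: eq_bigr => r _; case: (boolP (r \in A)) => rA; first by rewrite (p_offA r rA).2.
  by rewrite outx.
rewrite mulrC; congr (_ * _).
by apply: U_loc => r rA; [rewrite inx | rewrite inx | apply: out | apply: outx].
Qed.

End CliffordConjugation.

Lemma filter_predC_all T (a : pred T) s : all (predC a) s -> filter a s = [::].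
Proof. by elim: s => //= x s IH /andP [/negbTE -> /IH]. Qed.

Lemma pairwise_leq_split T (f : T -> nat) (s : seq T) k :
  pairwise (fun x y => f x <= f y)%N s ->
  [seq x <- s | f x <= k]%N ++ [seq x <- s | k < f x]%N = s.
Proof.
elim: s => [|x s IH] //; rewrite pairwise_cons => /andP [le_x /IH eq_s] /=.
case: leqP => [le_xk | lt_kx] /=; first by rewrite eq_s.
have gt_s : all (fun y => k < f y)%N s by apply: sub_all le_x => y; apply: leq_trans.
rewrite (all_filterP gt_s) filter_predC_all //.
by apply: sub_all gt_s => y; rewrite /= -ltnNge.
Qed.

Section OperationEqType.
Variable n : nat.

Definition kind_sum (k : kind n) : op_mx n + (bool * pauli n) :=
  match k with Gate U => inl U | Meas s p => inr (s, p) end.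
Definition sum_kind (x : op_mx n + (bool * pauli n)) : kind n :=
  match x with inl U => Gate U | inr (s, p) => Meas s p end.
Lemma kind_sumK : cancel kind_sum sum_kind. Proof. by case. Qed.

Definition operation_tuple (o : operation n) := (lvl o, supp o, knd o).
Definition tuple_operation (x : nat * {set 'I_n} * kind n) := Op x.1.1 x.1.2 x.2.
Lemma operation_tupleK : cancel operation_tuple tuple_operation. Proof. by case. Qed.

End OperationEqType.

HB.instance Definition _ n := Equality.copy (kind n) (can_type (@kind_sumK n)).
HB.instance Definition _ n := Equality.copy (operation n) (can_type (@operation_tupleK n)).

Definition level_ordered n (o o' : operation n) : bool :=
  (lvl o <= lvl o')%N && ((lvl o == lvl o') ==> [disjoint supp o & supp o']).

Section CircuitOperators.
Variable n : nat.
Implicit Types (C : circuit n) (o : operation n) (x : operation n * bool)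
  (A : seq (operation n * bool)) (M : op_mx n).

Definition ordered_mx T (f : T -> op_mx n) (s : seq T) : op_mx n :=
  foldr (fun t M => M *m f t) 1%:M s.

Lemma ordered_mx_cat T (f : T -> op_mx n) s1 s2 :
  ordered_mx f (s1 ++ s2) = ordered_mx f s2 *m ordered_mx f s1.
Proof. by elim: s1 => [|t s1 IH] /=; rewrite ?mulmx1 // IH mulmxA. Qed.

Lemma ordered_mx_comm (T : eqType) (f : T -> op_mx n) s M :
  {in s, forall t, M *m f t = f t *m M} -> M *m ordered_mx f s = ordered_mx f s *m M.
Proof.
elim: s => [|t s IH] comm_s /=; first by rewrite mul1mx mulmx1.
rewrite mulmxA IH => [|t' s_t']; last by apply: comm_s; rewrite inE s_t' orbT.
by rewrite -!mulmxA comm_s ?mem_head.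
Qed.

Definition gate_mx o : op_mx n := if knd o is Gate U then U else 1%:M.

Definition gates_mx C : op_mx n := ordered_mx gate_mx C.

Lemma gates_mx_cat C1 C2 : gates_mx (C1 ++ C2) = gates_mx C2 *m gates_mx C1.
Proof. exact: ordered_mx_cat. Qed.

Lemma gates_mx_clifford C : {in C, forall o, op_ok o} -> clifford_unitary (gates_mx C).
Proof.
elim: C => [|o C IH] C_ok /=; first exact: clifford_unitary1.
apply: clifford_unitaryM; first by apply: IH => o' C_o'; apply: C_ok; rewrite inE C_o' orbT.
have [_] := C_ok o (mem_head _ _); rewrite /gate_mx; case: (knd o) => [U [uU [cU _]] | s p _].
  by split.
exact: clifford_unitary1.
Qed.

Lemma U_levelE C l : U_level C l = gates_mx [seq o <- C | lvl o == l].
Proof.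
rewrite /U_level -[RHS]mulmx1; elim: C (1%:M) => [|o C IH] M /=; first by rewrite mul1mx.
rewrite IH; case: eqP => _ /=; rewrite /gate_mx; case: (knd o) => *; by rewrite ?mulmx1 ?mulmxA.
Qed.

Fixpoint annotate C (u : seq bool) : seq (operation n * bool) :=
  match C with
  | [::] => [::]
  | o :: C' => if knd o is Meas _ _ then (o, head false u) :: annotate C' (behead u)
               else (o, false) :: annotate C' u
  end.

Lemma map_fst_annotate C u : map fst (annotate C u) = C.
Proof. by elim: C u => [|o C IH] u //=; case: (knd o) => * /=; rewrite IH. Qed.

Definition meas_pauli x : op_mx n :=
  if knd x.1 is Meas s p then (if x.2 then herm_pauli_mx s p else 1%:M) else 1%:M.

Definition meas_paulis_mx A : op_mx n := ordered_mx meas_pauli A.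

(* [annot_mx (annotate C u)] is [C] with its [j]-th measurement replaced by [S_j ^ u_j]. *)
Definition annot_mx A : op_mx n := ordered_mx (fun x => gate_mx x.1 *m meas_pauli x) A.

Lemma annot_mx_cat A1 A2 : annot_mx (A1 ++ A2) = annot_mx A2 *m annot_mx A1.
Proof. exact: ordered_mx_cat. Qed.

Lemma gate_mx_meas_pauli_comm x y :
  op_ok x.1 -> op_ok y.1 -> [disjoint supp x.1 & supp y.1] ->
  gate_mx x.1 *m meas_pauli y = meas_pauli y *m gate_mx x.1.
Proof.
rewrite /op_ok /gate_mx /meas_pauli => -[_ ok_x] [_ ok_y] disj_xy.
case: (knd x.1) ok_x => [U [_ [_ U_loc]] | s p _]; last by rewrite mul1mx mulmx1.
case: (knd y.1) ok_y => [V _ | s p supp_p]; first by rewrite mul1mx mulmx1.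
case: y.2; last by rewrite mul1mx mulmx1.
rewrite /herm_pauli_mx -scalemxAr -scalemxAl (acts_within_pauli_comm U_loc) //.
by apply: disjointWl supp_p _; rewrite disjoint_sym.
Qed.

Lemma annot_mx_level A l :
  {in map fst A, forall o, op_ok o} -> all (fun x => lvl x.1 == l) A ->
  pairwise (relpre fst (@level_ordered n)) A ->
  annot_mx A = gates_mx (map fst A) *m meas_paulis_mx A.
Proof.
elim: A => [|x A IH] A_ok /=; first by rewrite mulmx1.
have A_ok' : {in map fst A, forall o, op_ok o}.
  by move=> o A_o; apply: A_ok; rewrite inE A_o orbT.
move=> /andP [/eqP lvl_x lvl_A] /andP [/allP ord_x /(IH A_ok' lvl_A) ->].
rewrite /gates_mx /= -!mulmxA; congr (_ *m _); rewrite !mulmxA; congr (_ *m _).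
rewrite /meas_paulis_mx -ordered_mx_comm // => y A_y.
apply: gate_mx_meas_pauli_comm; first by apply: A_ok; exact: mem_head.
  by apply: A_ok; rewrite inE map_f ?orbT.
have /andP [_ /implyP] := ord_x y A_y; apply.
by rewrite lvl_x eq_sym (allP lvl_A y A_y).
Qed.

Definition annot_fault A (k : nat) : pauli n :=
  foldr (fun x P => if knd x.1 is Meas _ p then
                      (if x.2 && (lvl x.1 - 1 == k)%N then pauli_mul p P else P)
                    else P) (pauli_id n) A.

Lemma meas_paulis_mx_level A k :
  all (fun x => lvl x.1 - 1 == k)%N A ->
  exists d, meas_paulis_mx A = d *: pauli_mx (annot_fault A k).
Proof.
elim: A => [|x A IH] /=; first by exists 1; rewrite scale1r pauli_mx_id.
move=> /andP [/eqP lvl_x /IH [d ->]]; rewrite /meas_pauli lvl_x eqxx andbT.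
case: (knd x.1) => [U | s p]; first by exists d; rewrite mulmx1.
case: x.2; last by exists d; rewrite mulmx1.
rewrite /herm_pauli_mx -scalemxAr -scalemxAl pauli_mxM pauli_mulC !scalerA.
by eexists.
Qed.

Lemma annot_fault_level A k :
  all (fun x => 0 < lvl x.1)%N A ->
  annot_fault A k = annot_fault [seq x <- A | lvl x.1 == k.+1] k.
Proof.
elim: A => [|x A IH] //= /andP [lvl_x_gt0 /IH ->].
have lvl_x : (lvl x.1 - 1 == k)%N = (lvl x.1 == k.+1) by apply/eqP/eqP; lia.
by case: ifP => /=; rewrite lvl_x => -> //; case: (knd x.1); rewrite ?andbF.
Qed.

End CircuitOperators.

Section Outcomes.
Variable n : nat.
Implicit Types (C : circuit n) (o : operation n) (A : seq (operation n * bool))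
  (K : op_mx n) (out : seq bool).

Definition meas_proj s (p : pauli n) (b : bool) : op_mx n :=
  2%:R^-1 *: (1%:M + (-1) ^+ b *: herm_pauli_mx s p).

Lemma meas_proj_sum s p : meas_proj s p false + meas_proj s p true = 1%:M.
Proof.
rewrite /meas_proj -scalerDr expr0 expr1 scale1r scaleN1r addrACA subrr addr0.
by rewrite -mulr2n -scaler_nat scalerA mulVf ?pnatr_eq0 // scale1r.
Qed.

Lemma herm_pauli_mx_proj s p b :
  herm_pauli_mx s p *m meas_proj s p b = (-1) ^+ b *: meas_proj s p b.
Proof.
rewrite /meas_proj -scalemxAr mulmxDr mulmx1 -scalemxAr herm_pauli_mx_sqr.
rewrite [RHS]scalerA mulrC -scalerA; congr (_ *: _).
by rewrite scalerDr scalerA -signr_addb addbb scale1r addrC.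
Qed.

Lemma kraus_cons o C out K : kraus (o :: C) out K =
  if knd o is Meas s p then kraus C (behead out) (meas_proj s p (head false out) *m K)
  else kraus C out (gate_mx o *m K).
Proof. by rewrite /gate_mx /=; case: (knd o). Qed.

Lemma nmeas_cons o C : nmeas (o :: C) = ((if knd o is Meas _ _ then 1 else 0) + nmeas C)%N.
Proof. by rewrite /nmeas /meas /=; case: (knd o). Qed.

Lemma nmeas_cat C1 C2 : nmeas (C1 ++ C2) = (nmeas C1 + nmeas C2)%N.
Proof. by rewrite /nmeas /meas pmap_cat size_cat. Qed.

Lemma kraus_cat C1 C2 out1 out2 K : size out1 = nmeas C1 ->
  kraus (C1 ++ C2) (out1 ++ out2) K = kraus C2 out2 (kraus C1 out1 K).
Proof.
elim: C1 out1 K => [|o C1 IH] out1 K /=; first by case: out1.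
rewrite nmeas_cons; case: (knd o) => [U | s p] /=; first exact: IH.
by case: out1 => [|b out1] //= [/IH].
Qed.

Lemma kraus0 C out : kraus C out 0 = 0.
Proof. by elim: C out => [|o C IH] out //=; case: (knd o) => *; rewrite mulmx0 IH. Qed.

Lemma in_outcome_codeP C out :
  in_outcome_code C out <-> size out = nmeas C /\ kraus C out 1%:M != 0.
Proof.
split=> [[size_out [psi [_ nz_psi]]] | [size_out /matrix0Pn [i [j K_ij]]]].
  split=> //; apply: contra_neq nz_psi => ->.
  by rewrite mul0mx /sqnorm mulmx0 mxE.
split=> //; pose e_j := \col_l (l == j)%:R : 'cV[algC]_(2 ^ n).
have e_jE M l : (M *m e_j) l 0 = M l j.
  rewrite mxE (bigD1 j) //= big1 ?addr0 => [|m /negbTE ne_m]; first by rewrite mxE eqxx mulr1.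
  by rewrite mxE ne_m mulr0.
have sqnormE v : sqnorm v = \sum_l `|v l 0| ^+ 2.
  by rewrite /sqnorm mxE; apply: eq_bigr => l _; rewrite !mxE normCK mulrC.
exists e_j; split.
  rewrite sqnormE (bigD1 j) //= big1 ?addr0 => [|m /negbTE ne_m]; rewrite mxE.
    by rewrite eqxx normr1 expr1n.
  by rewrite ne_m normr0 expr0n.
rewrite sqnormE psumr_eq0 => [|l _]; last exact: exprn_ge0.
apply: contra K_ij => /allP /(_ i (mem_index_enum i)); rewrite e_jE.
by rewrite sqrf_eq0 normr_eq0.
Qed.

Definition prefix_kraus0 C k : op_mx n :=
  kraus [seq o <- C | lvl o <= k]%N (nseq (nmeas [seq o <- C | lvl o <= k]%N) false) 1%:M.

Fixpoint annot_dot A out : bool :=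
  if A is x :: A' then
    (if knd x.1 is Meas _ _ then (x.2 && head false out) (+) annot_dot A' (behead out)
     else annot_dot A' out)
  else false.

Lemma dotb_annotate C u out : dotb (nmeas C) u out = annot_dot (annotate C u) out.
Proof.
elim: C u out => [|o C IH] u out; first by rewrite /dotb big_ord0.
rewrite nmeas_cons /=; case E: (knd o) => [U | s p]; rewrite /= E -IH //.
rewrite /dotb big_ord_recl; congr addb.
by apply: eq_bigr => j _; rewrite !nth_behead.
Qed.

Lemma annot_dot_cat_zeros A B out :
  annot_dot (A ++ B) (nseq (nmeas (map fst A)) false ++ out) = annot_dot B out.
Proof.
by elim: A => [|x A IH] //=; rewrite nmeas_cons; case: (knd x.1) => * /=; rewrite ?andbF IH.
Qed.

Lemma annot_mx_parity A K c :
  (forall out, size out = nmeas (map fst A) -> kraus (map fst A) out K != 0 ->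
     annot_dot A out = c) ->
  annot_mx A *m K = (-1) ^+ c *: (gates_mx (map fst A) *m K).
Proof.
elim: A K c => [|x A IH] K c parity_A /=.
  have [-> | nz_K] := eqVneq K 0; first by rewrite !mulmx0 scaler0.
  by rewrite -(parity_A [::]) // scale1r.
rewrite /meas_pauli -!mulmxA; case E: (knd x.1) => [U | s p] /=.
  rewrite mul1mx; apply: IH => out size_out nz_out.
  by have := parity_A out; rewrite map_cons nmeas_cons kraus_cons /= E; apply.
set S := if x.2 then herm_pauli_mx s p else 1%:M.
have S_proj b : S *m meas_proj s p b = (-1) ^+ (x.2 && b) *: meas_proj s p b.
  by rewrite /S; case: x.2; rewrite ?herm_pauli_mx_proj ?mul1mx ?scale1r.
have flip_b b : annot_mx A *m (S *m (meas_proj s p b *m K))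
    = (-1) ^+ c *: (gates_mx (map fst A) *m (meas_proj s p b *m K)).
  rewrite (mulmxA S) S_proj -scalemxAl -scalemxAr (IH _ (c (+) (x.2 && b))).
    by rewrite scalerA -signr_addb addbC addbK.
  move=> out size_out nz_out; have := parity_A (b :: out).
  rewrite map_cons nmeas_cons kraus_cons /= E /= size_out => /(_ erefl nz_out) <-.
  by rewrite addbC addKb.
have -> : K = meas_proj s p false *m K + meas_proj s p true *m K.
  by rewrite -mulmxDl meas_proj_sum mul1mx.
by rewrite /gate_mx E !mul1mx !mulmxDr !flip_b scalerDr.
Qed.

End Outcomes.

Section FaultOperators.
Variable n : nat.
Implicit Types C : circuit n.

Let fault_of_meas (s : seq (nat * bool * pauli n)) (u : seq bool) (k : nat) : pauli n :=
  foldr (@pauli_mul n) (pauli_id n)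
    [seq (nth (0%N, false, pauli_id n) s j).2 | j <- iota 0 (size s)
    & nth false u j && ((nth (0%N, false, pauli_id n) s j).1.1 - 1 == k)%N].

Let fault_of_meas_cons m s u k : fault_of_meas (m :: s) u k =
  if head false u && (m.1.1 - 1 == k)%N then pauli_mul m.2 (fault_of_meas s (behead u) k)
  else fault_of_meas s (behead u) k.
Proof.
rewrite /fault_of_meas /=.
have -> : iota 1 (size s) = map S (iota 0 (size s)) by exact: (iotaDl 1 0).
rewrite filter_map (eq_filter (a2 := fun j => nth false (behead u) j &&
                       ((nth (0%N, false, pauli_id n) s j).1.1 - 1 == k)%N)) => [|j].
  by rewrite (_ : nth false u 0 = head false u); [case: ifP => _ /=; rewrite -map_comp | case: u].
by rewrite /= nth_behead.
Qed.

Lemma F_of_annotate C u k : F_of C u k = annot_fault (annotate C u) k.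
Proof.
rewrite /F_of -/(fault_of_meas (meas C) u k).
elim: C u => [|o C IH] u //; case E: (knd o) => [U | s p]; rewrite /meas /= E /= ?E.
  exact: IH.
by rewrite fault_of_meas_cons -!IH.
Qed.

Lemma back_cumulant_depth C F : back_cumulant C F (depth C) = F (depth C).
Proof. by rewrite /back_cumulant leqnn subnn. Qed.

Lemma back_cumulant_rec C F k : (k < depth C)%N ->
  back_cumulant C F k =
  pauli_mul (F k) (conjP (U_level C k.+1) (back_cumulant C F k.+1)).
Proof.
move=> lt_kD; have eq_D : (depth C - k = (depth C - k.+1).+1)%N by lia.
by rewrite /back_cumulant lt_kD ltnW // eq_D /= -eq_D (subKn (ltnW lt_kD)) (subKn lt_kD).
Qed.

End FaultOperators.

Lemma lvl_le_depth n (C : circuit n) : all (fun o => lvl o <= depth C)%N C.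
Proof. by apply/allP => o C_o; apply: leq_bigmax_seq. Qed.

Section WellFormedCircuit.
Variables (n : nat) (C : circuit n).
Hypothesis C_wf : well_formed C.

Lemma well_formed_ok : {in C, forall o, op_ok o}.
Proof. by move=> o /(nthP (Op 0 set0 (Gate 1%:M))) [i lt_iC <-]; apply: C_wf.1. Qed.

Lemma well_formed_ordered : pairwise (@level_ordered n) C.
Proof.
apply/(pairwiseP (Op 0 set0 (Gate 1%:M))) => i j lt_iC lt_jC lt_ij.
have [le_ij disj_ij] := C_wf.2 i j (introT andP (conj lt_ij lt_jC)).
by apply/andP; split => //; apply/implyP => /eqP; apply: disj_ij.
Qed.

Lemma level_split k : [seq o <- C | lvl o <= k]%N ++ [seq o <- C | k < lvl o]%N = C.
Proof. by apply: pairwise_leq_split; apply: sub_pairwise well_formed_ordered => o o' /andP []. Qed.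

Lemma prefix_kraus0_neq0 k :
  in_outcome_code C (nseq (nmeas C) false) -> prefix_kraus0 C k != 0.
Proof.
case/in_outcome_codeP=> _; rewrite -{1 2}(level_split k) nmeas_cat nseqD.
rewrite kraus_cat ?size_nseq // /prefix_kraus0.
by apply: contra_neq => ->; rewrite kraus0.
Qed.

Variable u : seq bool.
Let A := annotate C u.

Let A_sorted : pairwise (fun x y => lvl x.1 <= lvl y.1)%N A.
Proof.
move: well_formed_ordered; rewrite -(map_fst_annotate C u) pairwise_map.
by apply: sub_pairwise => x y /andP [].
Qed.

Definition tail_mx k : op_mx n :=
  adj (gates_mx [seq o <- C | k < lvl o]%N) *m annot_mx [seq x <- A | k < lvl x.1]%N.

Lemma map_fst_filter_annotate (P : pred (operation n)) :
  map fst [seq x <- A | P x.1] = [seq o <- C | P o].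
Proof. by rewrite -filter_map map_fst_annotate. Qed.

Lemma annotate_level_split k :
  [seq x <- A | k < lvl x.1]%N =
  [seq x <- A | lvl x.1 == k.+1] ++ [seq x <- A | k.+1 < lvl x.1]%N.
Proof.
rewrite -{1}(pairwise_leq_split k.+1 (pairwise_filter _ A_sorted)) -!filter_predI.
congr (_ ++ _).
  by apply: eq_filter => x /=; apply/andP/eqP => [[]|->] //; lia.
by apply: eq_filter => x /=; apply/andP/idP => [[]|] //; lia.
Qed.

Lemma tail_mx_level_step k :
  tail_mx k = adj (U_level C k.+1) *m tail_mx k.+1 *m U_level C k.+1
                *m meas_paulis_mx [seq x <- A | lvl x.1 == k.+1].
Proof.
have W_L : annot_mx [seq x <- A | lvl x.1 == k.+1] =
           U_level C k.+1 *m meas_paulis_mx [seq x <- A | lvl x.1 == k.+1].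
  rewrite U_levelE -map_fst_filter_annotate (@annot_mx_level _ _ k.+1) ?filter_all //.
    move=> o; rewrite (map_fst_filter_annotate (fun o => lvl o == k.+1)) mem_filter.
    by move=> /andP [_]; apply: well_formed_ok.
  by apply: pairwise_filter; rewrite -pairwise_map map_fst_annotate; apply: well_formed_ordered.
have G_split : gates_mx [seq o <- C | k < lvl o]%N =
               gates_mx [seq o <- C | k.+1 < lvl o]%N *m U_level C k.+1.
  rewrite -!map_fst_filter_annotate annotate_level_split map_cat gates_mx_cat U_levelE.
  by rewrite -map_fst_filter_annotate.
by rewrite /tail_mx G_split adjM {1}annotate_level_split annot_mx_cat W_L !mulmxA.
Qed.

Lemma annotate_lvl_gt0 : all (fun x => 0 < lvl x.1)%N A.
Proof.
rewrite -(all_map fst (fun o => 0 < lvl o)%N) map_fst_annotate.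
by apply/allP => o /well_formed_ok [].
Qed.

Lemma tail_mx_back_cumulant k : (k <= depth C)%N ->
  exists c, tail_mx k = c *: pauli_mx (back_cumulant C (F_of C u) k).
Proof.
move=> le_kD; rewrite -(subKn le_kD).
elim: (depth C - k)%N (leq_subr k (depth C)) => [|i IH] le_iD.
  have A_le : all (fun x => lvl x.1 <= depth C)%N A.
    by rewrite -(all_map fst (fun o => lvl o <= depth C)%N) map_fst_annotate lvl_le_depth.
  rewrite subn0 /tail_mx back_cumulant_depth F_of_annotate.
  rewrite (annot_fault_level _ annotate_lvl_gt0) !filter_predC_all.
  - by exists 1; rewrite adj1 mul1mx pauli_mx_id scale1r.
  - by apply: sub_all A_le => x /=; lia.
  - by apply: sub_all A_le => x /=; lia.
  by apply: sub_all (lvl_le_depth C) => o /=; lia.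
have [c IHc] := IH (ltnW le_iD).
have eq_k : (depth C - i = (depth C - i.+1).+1)%N by lia.
rewrite eq_k in IHc *; set l := (depth C - i.+1)%N in IHc *.
have U_cliff : clifford_unitary (U_level C l.+1).
  rewrite U_levelE; apply: gates_mx_clifford => o; rewrite mem_filter => /andP [_].
  exact: well_formed_ok.
have [e conj_e] := conjP_pauli (back_cumulant C (F_of C u) l.+1) U_cliff.
have lvl_L : all (fun x => lvl x.1 - 1 == l)%N [seq x <- A | lvl x.1 == l.+1].
  by apply: sub_all (filter_all _ A) => x /eqP ->; rewrite subn1.
have [d meas_d] := meas_paulis_mx_level lvl_L.
rewrite tail_mx_level_step IHc -scalemxAr -scalemxAl conj_e meas_d.
have lt_lD : (l < depth C)%N by rewrite /l; lia.
rewrite (back_cumulant_rec (F_of C u) lt_lD) F_of_annotate (annot_fault_level _ annotate_lvl_gt0).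
exists (c * e * d * (-1) ^+ zx_form (conjP (U_level C l.+1) (back_cumulant C (F_of C u) l.+1))
                                    (annot_fault [seq x <- A | lvl x.1 == l.+1] l)).
by rewrite -!scalemxAl -!scalemxAr pauli_mxM pauli_mulC !scalerA.
Qed.

Lemma tail_mx_fixes_prefix k : in_outcome_perp C u ->
  tail_mx k *m prefix_kraus0 C k = prefix_kraus0 C k.
Proof.
move=> [_ perp_u]; set K := prefix_kraus0 C k.
have G_cliff : clifford_unitary (gates_mx [seq o <- C | k < lvl o]%N).
  by apply: gates_mx_clifford => o; rewrite mem_filter => /andP [_]; apply: well_formed_ok.
rewrite /tail_mx -mulmxA (_ : annot_mx _ *m K = gates_mx [seq o <- C | k < lvl o]%N *m K).
  by rewrite mulmxA mul_adj_unitary ?mul1mx //; case: G_cliff.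
have := @annot_mx_parity _ [seq x <- A | k < lvl x.1]%N K false.
rewrite /= expr0 scale1r !(map_fst_filter_annotate (fun o => k < lvl o)%N).
apply => out size_out nz_out.
have code_out : in_outcome_code C (nseq (nmeas [seq o <- C | lvl o <= k]%N) false ++ out).
  apply/in_outcome_codeP; split.
    by rewrite size_cat size_nseq size_out -nmeas_cat level_split.
  by rewrite -{1}(level_split k) kraus_cat ?size_nseq.
have := perp_u _ code_out; rewrite dotb_annotate -/A -{1}(pairwise_leq_split k A_sorted).
by rewrite -(map_fst_filter_annotate (fun o => lvl o <= k)%N) annot_dot_cat_zeros.
Qed.

End WellFormedCircuit.

Lemma anticommuting_fixed_point n (X Y K : op_mx n) :
  X *m Y = - (Y *m X) -> X *m K = K -> Y *m K = K -> K = 0.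
Proof.
move=> XY XK YK; have K_opp : K = - K.
  by rewrite -{1}XK -{1}YK mulmxA XY mulNmx -mulmxA XK YK.
apply/eqP; move/eqP: K_opp; rewrite -subr_eq0 opprK -mulr2n -scaler_nat scaler_eq0.
by rewrite pnatr_eq0.
Qed.

Unset Implicit Arguments.

Theorem mainTheorem14 (n : nat) (C : circuit n) :
  well_formed C ->
  linear_outcome_code C ->
  forall u v : seq bool,
    in_outcome_perp C u -> in_outcome_perp C v ->
    fault_comm (depth C) (back_cumulant C (F_of C u)) (back_cumulant C (F_of C v))
      = false.
Proof.
move=> C_wf [zero_code _] u v perp_u perp_v; rewrite /fault_comm big1 // => k _.
have le_kD : (k <= depth C)%N by rewrite -ltnS.
have [cu Xu] := tail_mx_back_cumulant C_wf u le_kD.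
have [cv Xv] := tail_mx_back_cumulant C_wf v le_kD.
apply/negP => anti; move: (prefix_kraus0_neq0 C_wf k zero_code); apply/negP/negPn/eqP.
apply: (anticommuting_fixed_point _ (tail_mx_fixes_prefix C_wf k perp_u)
                                     (tail_mx_fixes_prefix C_wf k perp_v)).
rewrite Xu Xv -!scalemxAl -!scalemxAr pauli_mx_comm anti expr1 scaleN1r.
by rewrite !scalerN scalerA mulrC -scalerA.
Qed.
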